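(* Let $G$ be a finite group and let $M,N$ be normal subgroups with $1<M\le N<G$ such that every $g\in G\setminus N$ is conjugate in $G$ to every element of $gM$. If $G/N$ is not a $p$-group for any prime $p$, then $M\cap Z(G)=\{1\}$. *)

From mathcomp Require Import all_boot all_order all_fingroup all_solvable.

From mathcomp Require Import all_boot all_order all_fingroup all_solvable.
Import GroupScope.

(* If [M :&: 'Z(G)] is nontrivial, Cauchy's theorem gives a nontrivial
   [q]-element [z] in it for some prime [q].  As [G / N] is not a [q]-group,
   some coset of [N] outside [N] is not a [q]-element, and the [q']-part [x] of
   a representative still lies outside [N].  Then [x * z] is conjugate to [x];
   since [z] is central, the [q]-part of [x * z] is [z], whereas that of any
   conjugate of [x] is [1]. *)

Section PiParts.

Context {gT : finGroupType}.

Lemma exists_prime_elt (H : {group gT}) : H :!=: 1 ->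
  exists q z, [/\ prime q, z \in H, z != 1 & q.-elt z].
Proof.
move=> ntH; have q_pr : prime (pdiv #|H|) by rewrite pdiv_prime ?cardG_gt1.
have [z Hz oz] := Cauchy q_pr (pdiv_dvd #|H|).
exists (pdiv #|H|), z; split=> //; last by rewrite /p_elt oz pnat_id.
by rewrite -order_gt1 oz prime_gt1.
Qed.

Lemma exists_non_pi_elt [pi : nat_pred] [H : {group gT}] : ~~ pi.-group H ->
  exists2 x, x \in H & ~~ pi.-elt x.
Proof.
move=> not_piH; apply/exists_inP; apply: contraNT not_piH => /exists_inPn all_pi.
apply/pgroupP=> p p_pr p_dvd.
have [x Hx ox] := Cauchy p_pr p_dvd.
by have := all_pi x Hx; rewrite negbK /p_elt ox pnatE.
Qed.

Lemma lift_pi'_elt_quotient [pi : nat_pred] [G N : {group gT}] [X : coset_of N] :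
  X \in G / N -> ~~ pi.-elt X -> exists2 x, x \in G :\: N & pi^'.-elt x.
Proof.
case/morphimP=> y Ny Gy ->{X} not_pi_Ny; exists y.`_pi^'; last exact: p_elt_constt.
rewrite inE (groupX _ Gy) andbT; apply: contra not_pi_Ny => N_y'.
have: coset N y.`_pi^' = 1 by rewrite coset_id.
by rewrite (morph_constt (coset_morphism N)) //= => /constt1P; rewrite p_eltNK.
Qed.

Lemma conj_mul_commuting_pi_elt [pi : nat_pred] [A : {set gT}] [x z : gT] :
  commute x z -> pi^'.-elt x -> pi.-elt z -> x * z \in x ^: A -> z = 1.
Proof.
move=> cxz pi'x piz /imsetP[a _ xz_xa].
have := congr1 (constt^~ pi) xz_xa; rewrite consttM // consttJ.
by rewrite (constt1P pi'x) (constt_p_elt piz) conj1g mul1g.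
Qed.

End PiParts.

Theorem mainTheorem13 (gT : finGroupType) (G M N : {group gT}) :
  M <| G -> N <| G ->
  M :!=: 1 -> M \subset N -> N \proper G ->
  (forall g, g \in G :\: N -> forall m, m \in M -> g * m \in g ^: G) ->
  ~ (exists p : nat, prime p /\ p.-group (G / N)) ->
  M :&: 'Z(G) = 1.
Proof.
move=> _ _ _ _ _ conjG_coset not_pgroup.
apply/eqP; apply: contraT => /exists_prime_elt[q [z [q_pr /setIP[Mz Zz] ntz qz]]].
have not_q_quo : ~~ q.-group (G / N) by apply/negP=> qGN; apply: not_pgroup; exists q.
have [X GNX not_qX] := exists_non_pi_elt not_q_quo.
have [x GNx q'x] := lift_pi'_elt_quotient GNX not_qX.
have cxz : commute x z.
  by case/centerP: Zz => _ cz; apply/esym/cz; case/setDP: GNx.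
by rewrite (conj_mul_commuting_pi_elt cxz q'x qz (conjG_coset x GNx z Mz)) eqxx in ntz.
Qed.
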